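(* Let $\sigma\subset N_{\mathbb{Q}}$ be a pointed rational polyhedral cone, $n=\dim N_{\mathbb{Q}}$, and let $P=Q+\sigma^{\vee}$ with $Q\subset M_{\mathbb{Q}}$ a polytope whose vertices lie in $M$. Then for every integer $e\ge n-1$ the polyhedron $eP$ is normal. In particular, every integrally closed homogeneous ideal of an affine toric surface $\mathbf{k}[\sigma^{\vee}\cap M]$ (with $n=2$) is normal.
   Context: $N$ lattice of rank $n$, $M$ its dual; $\sigma^{\vee}=\{m\in M_{\mathbb{Q}}: m(v)\ge0\ \forall v\in\sigma\}$. $eP$ is the dilation of $P$ by $e$. A polyhedron $P'=Q'+\sigma^{\vee}$ with $Q'$ a lattice polytope is normal if for every integer $e\ge1$, $(eP')\cap M=\{m_1+\cdots+m_e:\ m_i\in P'\cap M\}$. An ideal is normal if all its positive powers are integrally closed; homogeneous ideals of $\mathbf{k}[\sigma^{\vee}\cap M]$ are nonzero ideals generated by monomials $\chi^m$. *)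

(* N = M = Z^n, N_Q = M_Q = Q^n realised as row vectors 'rV[rat]_n,
   with the pairing M x N -> Q the standard dot product. *)
From HB Require Import structures.
From mathcomp Require Import all_boot all_order all_algebra.
Set Implicit Arguments. Unset Strict Implicit. Unset Printing Implicit Defensive.
Import Order.TTheory GRing.Theory Num.Theory.
Local Open Scope ring_scope.

Definition pairing (n : nat) (m v : 'rV[rat]_n) : rat := \sum_(i < n) m 0 i * v 0 i.

Definition lattice_pt (n : nat) (v : 'rV[rat]_n) : Prop :=
  forall i : 'I_n, exists z : int, v 0 i = z%:~R.

Definition cone_gen (n : nat) (gens : seq 'rV[rat]_n) (v : 'rV[rat]_n) : Prop :=
  exists lam : 'I_(size gens) -> rat,
    (forall i, 0 <= lam i) /\ v = \sum_(i < size gens) lam i *: gens`_i.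

Definition pointed (n : nat) (sigma : 'rV[rat]_n -> Prop) : Prop :=
  forall v, sigma v -> sigma (- v) -> v = 0.

Definition dual_cone (n : nat) (sigma : 'rV[rat]_n -> Prop) (m : 'rV[rat]_n) : Prop :=
  forall v, sigma v -> 0 <= pairing m v.

Definition conv_hull (n : nat) (pts : seq 'rV[rat]_n) (x : 'rV[rat]_n) : Prop :=
  exists lam : 'I_(size pts) -> rat,
    [/\ forall i, 0 <= lam i, \sum_(i < size pts) lam i = 1 &
        x = \sum_(i < size pts) lam i *: pts`_i].

Definition minkowski (n : nat) (A B : 'rV[rat]_n -> Prop) (x : 'rV[rat]_n) : Prop :=
  exists a b, A a /\ B b /\ x = a + b.

Definition dilate (n : nat) (e : nat) (P : 'rV[rat]_n -> Prop) (x : 'rV[rat]_n) : Prop :=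
  exists p, P p /\ x = e%:R *: p.

Definition normal_polyhedron (n : nat) (P : 'rV[rat]_n -> Prop) : Prop :=
  forall k : nat, (1 <= k)%N -> forall m : 'rV[rat]_n,
    (dilate k P m /\ lattice_pt m) <->
    (exists f : 'I_k -> 'rV[rat]_n,
        (forall i, P (f i) /\ lattice_pt (f i)) /\ m = \sum_(i < k) f i).

From HB Require Import structures.
From mathcomp Require Import all_boot all_order all_algebra.
From mathcomp Require Import zify.
Import Order.TTheory GRing.Theory Num.Theory.
Local Open Scope ring_scope.

Set Implicit Arguments.
Unset Strict Implicit.
Unset Printing Implicit Defensive.

(* Every point of [Q + C] is a convex combination of lattice points of [Q + C]
   (clear the denominators of its cone part). Hence, by Caratheodory, a lattice
   point [x] of [(c + d) P] is [sum_i a_i w_i] with [n + 1] lattice points [w_i] of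
   [P] and [sum_i a_i = c + d]. If the integral parts [trunc a_i] add up to at least
   [d], they split off a lattice point of [d P] and leave one of [c P]. Otherwise,
   since [c >= n - 1], the fractional parts are all positive and add up to exactly
   [n], so [z = sum_i (1 - frac a_i) w_i] is a lattice point of [P]; exchanging a
   suitable [w_j] for [z] (ratio test) multiplies the integer [det [1 | w_i]] by
   [1 - frac a_j < 1], which can happen only finitely often. When the determinant
   vanishes, an affine dependence frees one coefficient instead, and the remaining
   fractional parts add up to at most [n - 1 <= c]. Peeling off lattice points of
   [c P] one at a time proves that [c P] is normal. *)

Section LatticePoints.
Variable n : nat.
Implicit Types u v : 'rV[rat]_n.

Lemma lattice_ptE v : lattice_pt v <-> forall i, v 0 i \is a Num.int.
Proof. by split=> H i; apply/intrP; apply: H. Qed.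

Lemma lattice_pt0 : lattice_pt (0 : 'rV[rat]_n).
Proof. by apply/lattice_ptE => i; rewrite mxE. Qed.

Lemma lattice_ptD u v : lattice_pt u -> lattice_pt v -> lattice_pt (u + v).
Proof. by move=> /lattice_ptE Hu /lattice_ptE Hv; apply/lattice_ptE => i; rewrite mxE rpredD. Qed.

Lemma lattice_ptB u v : lattice_pt u -> lattice_pt v -> lattice_pt (u - v).
Proof. by move=> /lattice_ptE Hu /lattice_ptE Hv; apply/lattice_ptE => i; rewrite !mxE rpredB. Qed.

Lemma lattice_ptZ (r : rat) v : r \is a Num.int -> lattice_pt v -> lattice_pt (r *: v).
Proof. by move=> Hr /lattice_ptE Hv; apply/lattice_ptE => i; rewrite mxE rpredM. Qed.

Lemma lattice_pt_sum (I : Type) (r : seq I) (P : pred I) (F : I -> 'rV[rat]_n) :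
  (forall i, P i -> lattice_pt (F i)) -> lattice_pt (\sum_(i <- r | P i) F i).
Proof. by move=> HF; elim/big_ind: _ => //; [exact: lattice_pt0 | exact: lattice_ptD]. Qed.

Lemma lattice_pt_denom v : exists2 D : nat, (0 < D)%N & lattice_pt (D%:R *: v).
Proof.
exists (\prod_(i < n) `|denq (v ord0 i)|)%N.
  by rewrite prodn_gt0 // => i; rewrite absz_gt0 denq_neq0.
apply/lattice_ptE => i; rewrite mxE (bigD1 i) //= natrM mulrAC.
have -> : `|denq (v 0 i)|%:R * v 0 i = (numq (v 0 i))%:~R.
  by rewrite numqE mulrC -[in RHS](gez0_abs (ltW (denq_gt0 _))).
by rewrite rpredM ?rpred_int ?rpred_nat.
Qed.

End LatticePoints.

Definition lattice_points n (P : 'rV[rat]_n -> Prop) (x : 'rV[rat]_n) : Prop :=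
  lattice_pt x /\ P x.

Definition hull_comb n N (G : 'rV[rat]_n -> Prop) (a : 'I_N -> rat)
    (w : 'I_N -> 'rV[rat]_n) (t : rat) (x : 'rV[rat]_n) : Prop :=
  [/\ forall i, 0 <= a i, forall i, G (w i), \sum_i a i = t & x = \sum_i a i *: w i].

(* For [t > 0], [scaled_hull G t] is the dilation [t conv(G)]; [scaled_hull G 0] is [{0}]. *)
Definition scaled_hull n (G : 'rV[rat]_n -> Prop) (t : rat) (x : 'rV[rat]_n) : Prop :=
  exists N (a : 'I_N -> rat) (w : 'I_N -> 'rV[rat]_n), hull_comb G a w t x.

Section ScaledHull.
Variables (n : nat) (G : 'rV[rat]_n -> Prop).

Lemma scaled_hull1 w : G w -> scaled_hull G 1 w.
Proof.
move=> Gw; exists 1%N, (fun=> 1), (fun=> w).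
by split=> //; rewrite big_ord1 ?scale1r.
Qed.

Lemma scaled_hull0 : scaled_hull G 0 0.
Proof. by exists 0%N, (fun=> 0), (fun=> 0); split; rewrite ?big_ord0 // => -[]. Qed.

Lemma scaled_hullD t1 t2 x1 x2 :
  scaled_hull G t1 x1 -> scaled_hull G t2 x2 -> scaled_hull G (t1 + t2) (x1 + x2).
Proof.
move=> [N1 [a1 [w1 [a1_ge0 Gw1 <- ->]]]] [N2 [a2 [w2 [a2_ge0 Gw2 <- ->]]]].
pose cat T (f1 : 'I_N1 -> T) (f2 : 'I_N2 -> T) i :=
  match split i with inl j => f1 j | inr j => f2 j end.
have catL T f1 f2 i : cat T f1 f2 (lshift N2 i) = f1 i by rewrite /cat (unsplitK (inl _ i)).
have catR T f1 f2 i : cat T f1 f2 (rshift N1 i) = f2 i by rewrite /cat (unsplitK (inr _ i)).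
exists (N1 + N2)%N, (cat _ a1 a2), (cat _ w1 w2); split.
- by move=> i; rewrite /cat; case: (split i).
- by move=> i; rewrite /cat; case: (split i).
- by rewrite big_split_ord; congr (_ + _); apply: eq_bigr => i _; rewrite ?catL ?catR.
- by rewrite big_split_ord; congr (_ + _); apply: eq_bigr => i _; rewrite ?catL ?catR.
Qed.

Lemma scaled_hullZ r t x : 0 <= r -> scaled_hull G t x -> scaled_hull G (r * t) (r *: x).
Proof.
move=> r_ge0 [N [a [w [a_ge0 Gw <- ->]]]].
exists N, (fun i => r * a i), w; split=> //.
- by move=> i; rewrite mulr_ge0.
- by rewrite mulr_sumr.
- by rewrite scaler_sumr; apply: eq_bigr => i _; rewrite scalerA.
Qed.

Lemma scaled_hull_sum (I : Type) (r : seq I) (P : pred I) (t : I -> rat) (f : I -> 'rV[rat]_n) :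
  (forall i, P i -> scaled_hull G (t i) (f i)) ->
  scaled_hull G (\sum_(i <- r | P i) t i) (\sum_(i <- r | P i) f i).
Proof.
move=> Hf; apply: (big_ind2 (scaled_hull G)) => //; first exact: scaled_hull0.
by move=> ? ? ? ?; apply: scaled_hullD.
Qed.

Lemma scaled_hullS (G' : 'rV[rat]_n -> Prop) t x :
  (forall w, G w -> G' w) -> scaled_hull G t x -> scaled_hull G' t x.
Proof. by move=> sGG' [N [a [w [? Gw ? ?]]]]; exists N, a, w; split=> // i; apply: sGG'. Qed.

Lemma scaled_hull_ind (Q : rat -> 'rV[rat]_n -> Prop) :
  Q 0 0 -> (forall t1 t2 x1 x2, Q t1 x1 -> Q t2 x2 -> Q (t1 + t2) (x1 + x2)) ->
  (forall r t x, 0 <= r -> Q t x -> Q (r * t) (r *: x)) -> (forall w, G w -> Q 1 w) ->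
  forall t x, scaled_hull G t x -> Q t x.
Proof.
move=> Q0 QD QZ QG t x [N [a [w [a_ge0 Gw <- Ex]]]]; rewrite {}Ex.
apply: (big_ind2 Q) => //; first by move=> ? ? ? ?; apply: QD.
by move=> i _; rewrite -[X in Q X _]mulr1; apply: QZ => //; apply: QG.
Qed.

Lemma scaled_hull0_eq x : scaled_hull G 0 x -> x = 0.
Proof.
move=> [N [a [w [a_ge0 _ sa0 ->]]]].
by rewrite big1 // => i _; rewrite (psumr_eq0P (fun i _ => a_ge0 i) sa0) ?scale0r.
Qed.

End ScaledHull.

Definition convex_set n (P : 'rV[rat]_n -> Prop) : Prop :=
  forall t x, 0 < t -> scaled_hull P t x -> P (t^-1 *: x).

Section ConvexSets.
Variable n : nat.

Lemma convex_set_cone (C : 'rV[rat]_n -> Prop) :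
  C 0 -> (forall x y, C x -> C y -> C (x + y)) ->
  (forall r x, 0 <= r -> C x -> C (r *: x)) -> convex_set C.
Proof.
move=> C0 CD CZ t x t_gt0 Hx; apply: (CZ); first by rewrite invr_ge0 ltW.
move: Hx; apply: (scaled_hull_ind (Q := fun _ x => C x)) => // r ? ?; exact: CZ.
Qed.

Lemma conv_hull_nth (verts : seq 'rV[rat]_n) (i : 'I_(size verts)) :
  conv_hull verts verts`_i.
Proof.
exists (fun j => (j == i)%:R); split.
- by move=> j; rewrite ler0n.
- by rewrite (bigD1 i) //= eqxx big1 ?addr0 // => j /negbTE ->.
- by rewrite (bigD1 i) //= eqxx scale1r big1 ?addr0 // => j /negbTE ->; rewrite scale0r.
Qed.

Lemma convex_set_conv_hull (verts : seq 'rV[rat]_n) : convex_set (conv_hull verts).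
Proof.
pose Q t x := exists lam : 'I_(size verts) -> rat,
  [/\ forall i, 0 <= lam i, \sum_i lam i = t & x = \sum_i lam i *: verts`_i].
have QZ r t x : 0 <= r -> Q t x -> Q (r * t) (r *: x).
  move=> r_ge0 [lam [lam_ge0 <- ->]]; exists (fun i => r * lam i); split.
  - by move=> i; rewrite mulr_ge0.
  - by rewrite mulr_sumr.
  - by rewrite scaler_sumr; apply: eq_bigr => i _; rewrite scalerA.
move=> t x t_gt0 Hx; suff : Q (t^-1 * t) (t^-1 *: x) by rewrite mulVf ?gt_eqF.
apply: (QZ); first by rewrite invr_ge0 ltW.
move: Hx; apply: scaled_hull_ind => //.
- by exists (fun=> 0); split=> //; rewrite big1 // => i _; rewrite scale0r.
- move=> t1 t2 x1 x2 [l1 [l1_ge0 <- ->]] [l2 [l2_ge0 <- ->]].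
  exists (fun i => l1 i + l2 i); split.
  + by move=> i; rewrite addr_ge0.
  + by rewrite big_split.
  + by rewrite -big_split; apply: eq_bigr => i _; rewrite scalerDl.
Qed.

Lemma convex_set_minkowski (A B : 'rV[rat]_n -> Prop) :
  convex_set A -> convex_set B -> convex_set (minkowski A B).
Proof.
move=> cvxA cvxB t x t_gt0 Hx.
suff [a [b [Ha Hb ->]]] :
    exists a b, [/\ scaled_hull A t a, scaled_hull B t b & x = a + b].
  exists (t^-1 *: a), (t^-1 *: b).
  by rewrite scalerDr; split; [apply: cvxA | split; [apply: cvxB|]].
move: Hx; apply: (scaled_hull_ind (Q := fun t x =>
  exists a b, [/\ scaled_hull A t a, scaled_hull B t b & x = a + b])).
- by exists 0, 0; split; rewrite ?addr0 //; apply: scaled_hull0.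
- move=> t1 t2 x1 x2 [a1 [b1 [? ? ->]]] [a2 [b2 [? ? ->]]].
  by exists (a1 + a2), (b1 + b2); split; [apply: scaled_hullD..| rewrite addrACA].
- move=> r t' x' r_ge0 [a [b [? ? ->]]].
  by exists (r *: a), (r *: b); split; [apply: scaled_hullZ..| rewrite scalerDr].
- by move=> w [a [b [? [? ->]]]]; exists a, b; split=> //; apply: scaled_hull1.
Qed.

Lemma dual_cone0 (S : 'rV[rat]_n -> Prop) : dual_cone S 0.
Proof. by move=> v _; rewrite /pairing big1 // => i _; rewrite mxE mul0r. Qed.

Lemma dual_coneD (S : 'rV[rat]_n -> Prop) u v :
  dual_cone S u -> dual_cone S v -> dual_cone S (u + v).
Proof.
move=> Su Sv s Ss; rewrite /pairing (eq_bigr (fun i => u 0 i * s 0 i + v 0 i * s 0 i)).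
  by rewrite big_split addr_ge0 ?Su ?Sv.
by move=> i _; rewrite mxE mulrDl.
Qed.

Lemma dual_coneZ (S : 'rV[rat]_n -> Prop) r u :
  0 <= r -> dual_cone S u -> dual_cone S (r *: u).
Proof.
move=> r_ge0 Su s Ss; rewrite /pairing (eq_bigr (fun i => r * (u 0 i * s 0 i))).
  by rewrite -mulr_sumr mulr_ge0 ?Su.
by move=> i _; rewrite mxE mulrA.
Qed.

Lemma convex_set_dual_cone (S : 'rV[rat]_n -> Prop) : convex_set (dual_cone S).
Proof.
apply: convex_set_cone; [exact: dual_cone0 | exact: dual_coneD | exact: dual_coneZ].
Qed.

(* [q + c] is the barycentre of [q] and [q + D c] with weights [1 - 1/D] and [1/D],
   and both are convex combinations of lattice points once [D c] is integral. *)
Lemma minkowski_lattice_hull (verts : seq 'rV[rat]_n) (C : 'rV[rat]_n -> Prop) :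
  (forall v, v \in verts -> lattice_pt v) -> C 0 ->
  (forall r x, 0 <= r -> C x -> C (r *: x)) ->
  forall x, minkowski (conv_hull verts) C x ->
  scaled_hull (lattice_points (minkowski (conv_hull verts) C)) 1 x.
Proof.
move=> verts_lattice C0 CZ _ [q [c [[lam [lam_ge0 sum_lam Eq]] [Cc ->]]]].
set L := lattice_points _.
have hull_shift u : lattice_pt u -> C u -> scaled_hull L 1 (q + u).
  move=> lat_u Cu; exists (size verts), lam, (fun i => verts`_i + u); split=> //.
    move=> i; split; first by apply: lattice_ptD lat_u; apply/verts_lattice/mem_nth.
    by exists verts`_i, u; split=> //; apply: conv_hull_nth.
  rewrite Eq -[u in LHS]scale1r -sum_lam scaler_suml -big_split.
  by apply: eq_bigr => i _; rewrite scalerDr.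
have [D D_gt0 lat_Dc] := lattice_pt_denom c.
have hull_q : scaled_hull L 1 q.
  by rewrite -[q]addr0; apply: hull_shift => //; apply: lattice_pt0.
have hull_qDc := hull_shift _ lat_Dc (CZ _ _ (ler0n _ D) Cc).
have D_neq0 : D%:R != 0 :> rat by rewrite pnatr_eq0 -lt0n.
have invD_ge0 : 0 <= D%:R^-1 :> rat by rewrite invr_ge0.
have one_subinvD_ge0 : 0 <= 1 - D%:R^-1 :> rat by rewrite subr_ge0 invf_le1 ?ler1n ?ltr0n.
have := scaled_hullD (scaled_hullZ one_subinvD_ge0 hull_q) (scaled_hullZ invD_ge0 hull_qDc).
by rewrite !mulr1 subrK scalerDr scalerA mulVf // scale1r addrA -scalerDl subrK scale1r.
Qed.

End ConvexSets.

(* Row [i] is [(1, w i)]. *)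
Definition homog_mx n N (w : 'I_N -> 'rV[rat]_n) : 'M[rat]_(N, n.+1) :=
  \matrix_(i, k) if unlift ord0 k is Some k' then w i 0 k' else 1.

Definition affine_dep n N (w : 'I_N -> 'rV[rat]_n) (mu : 'I_N -> rat) : Prop :=
  [/\ exists i, mu i != 0, \sum_i mu i = 0 & \sum_i mu i *: w i = 0].

Section AffineDependence.
Variables (n N : nat) (w : 'I_N -> 'rV[rat]_n).

Lemma affine_dep_of_kernel (v : 'rV[rat]_N) :
  v != 0 -> v *m homog_mx w = 0 -> affine_dep w (fun i => v 0 i).
Proof.
move=> v_neq0 /matrixP vw0; split.
- apply/existsP; apply: contraNT v_neq0; rewrite negb_exists => /forallP v0.
  by apply/eqP/rowP => i; rewrite mxE; apply/eqP; rewrite -[_ == _]negbK v0.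
- move: (vw0 0 ord0); rewrite !mxE => sum_v; rewrite -[RHS]sum_v.
  by apply: eq_bigr => i _; rewrite mxE unlift_none mulr1.
- apply/rowP => k; move: (vw0 0 (lift ord0 k)); rewrite !mxE => sum_vw.
  by rewrite -[RHS]sum_vw summxE; apply: eq_bigr => i _; rewrite !mxE liftK.
Qed.

Lemma affine_dep_of_lt : (n.+1 < N)%N -> exists mu, affine_dep w mu.
Proof.
move=> lt_nN; have /rowV0Pn[v /sub_kermxP vw v_neq0] : kermx (homog_mx w) != 0.
  rewrite kermx_eq0 /row_free; apply: contraTN lt_nN => /eqP <-.
  by rewrite -leqNgt rank_leq_col.
by exists (fun i => v 0 i); apply: affine_dep_of_kernel.
Qed.

End AffineDependence.

Lemma affine_dep_of_det0 n (w : 'I_n.+1 -> 'rV[rat]_n) :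
  \det (homog_mx w) = 0 -> exists mu, affine_dep w mu.
Proof.
by move/eqP/det0P => [v v_neq0 vw]; exists (fun i => v 0 i); apply: affine_dep_of_kernel.
Qed.

Lemma affine_depN n N (w : 'I_N -> 'rV[rat]_n) mu :
  affine_dep w mu -> affine_dep w (fun i => - mu i).
Proof.
move=> [[i mu_i] sum_mu sum_muw]; split; first by exists i; rewrite oppr_eq0.
  by rewrite sumrN sum_mu oppr0.
rewrite (eq_bigr (fun k => - (mu k *: w k))) ?sumrN ?sum_muw ?oppr0 // => k _.
by rewrite scaleNr.
Qed.

Lemma ratio_test N (a mu : 'I_N -> rat) i0 : (forall i, 0 <= a i) -> 0 < mu i0 ->
  exists j s, [/\ 0 < mu j, 0 <= s, a j = s * mu j & forall i, 0 <= a i - s * mu i].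
Proof.
move=> a_ge0 mu_i0.
case: (@real_arg_minP _ _ i0 (fun i => 0 < mu i) (fun i => a i / mu i)) => //.
  by move=> i _; rewrite num_real.
move=> j mu_j min_j; exists j, (a j / mu j); split=> //.
- by rewrite divr_ge0 // ltW.
- by rewrite divfK // gt_eqF.
move=> i; rewrite subr_ge0; have [mu_i|mu_i] := ltrP 0 (mu i).
  by rewrite -ler_pdivlMr //; apply: min_j.
by apply: le_trans (a_ge0 i); rewrite mulr_ge0_le0 // divr_ge0 // ltW.
Qed.

Section Caratheodory.
Variables (n : nat) (G : 'rV[rat]_n -> Prop).

Lemma hull_comb_affine_dep N (a mu : 'I_N -> rat) w t x :
  hull_comb G a w t x -> affine_dep w mu ->
  exists a' j, hull_comb G a' w t x /\ a' j = 0.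
Proof.
move=> [a_ge0 Gw sum_a Ex] dep; have [[i0 mu_i0] _ _] := dep.
wlog mu_gt0 : mu dep mu_i0 / 0 < mu i0.
  move=> hwlog; have [|mu_le0] := ltrP 0 (mu i0); first exact: hwlog.
  apply: (hwlog _ (affine_depN dep)); first by rewrite oppr_eq0.
  by rewrite oppr_gt0 lt_neqAle mu_i0.
have [_ sum_mu sum_muw] := dep.
have [j [s [_ _ a_j a'_ge0]]] := ratio_test a_ge0 mu_gt0.
exists (fun i => a i - s * mu i), j; split; last by rewrite a_j subrr.
split=> //; first by rewrite sumrB -mulr_sumr sum_mu mulr0 subr0.
rewrite (eq_bigr (fun i => a i *: w i - s *: (mu i *: w i))); last first.
  by move=> i _; rewrite scalerBl scalerA.
by rewrite sumrB -scaler_sumr sum_muw scaler0 subr0.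
Qed.

Lemma hull_comb_lift N (a : 'I_N.+1 -> rat) w t x j :
  hull_comb G a w t x -> a j = 0 ->
  hull_comb G (fun i => a (lift j i)) (fun i => w (lift j i)) t x.
Proof.
move=> [a_ge0 Gw sum_a Ex] a_j; split=> //.
  by rewrite -sum_a (bigD1_ord j) //= a_j add0r.
by rewrite Ex (bigD1_ord j) //= a_j scale0r add0r.
Qed.

Lemma hull_comb_widen N M (a : 'I_N.+1 -> rat) w t x : (N < M)%N ->
  hull_comb G a w t x -> exists a' (w' : 'I_M -> 'rV[rat]_n), hull_comb G a' w' t x.
Proof.
move=> lt_NM [a_ge0 Gw <- ->].
exists (fun i => if (i < N.+1)%N then a (inord i) else 0), (fun i => w (inord i)).
split=> //; first by move=> i; case: ifP.
  rewrite -big_mkcond -(big_ord_widen _ (fun i => a (inord i))) //.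
  by apply: eq_bigr => i _; rewrite inord_val.
rewrite (eq_bigr (fun i : 'I_M => if (i < N.+1)%N then a (inord i) *: w (inord i) else 0)).
  rewrite -big_mkcond -(big_ord_widen _ (fun i => a (inord i) *: w (inord i))) //.
  by apply: eq_bigr => i _; rewrite inord_val.
by move=> i _; case: ifP; rewrite ?scale0r.
Qed.

Lemma caratheodory t x : 0 < t -> scaled_hull G t x ->
  exists (a : 'I_n.+1 -> rat) w, hull_comb G a w t x.
Proof.
move=> t_gt0 [N [a [w hull_x]]].
case: N a w hull_x => [a w [_ _ sum_a _]|N]; first by move: t_gt0; rewrite -sum_a big_ord0 ltxx.
elim: N => [|N IH] a w hull_x; first exact: hull_comb_widen (ltn0Sn n) hull_x.
have [lt_Nn|le_nN] := ltnP N.+1 n.+1; first exact: hull_comb_widen lt_Nn hull_x.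
have [mu dep] := affine_dep_of_lt w (le_nN : (n.+1 < N.+2)%N).
have [a' [j [hull_x' a'_j]]] := hull_comb_affine_dep hull_x dep.
exact: IH (hull_comb_lift hull_x' a'_j).
Qed.

End Caratheodory.

(* Only meaningful for [r >= 0]: [Num.truncn] is [0] on negative numbers. *)
Definition frac (r : rat) : rat := r - (Num.truncn r)%:R.

Lemma frac_ge0 r : 0 <= r -> 0 <= frac r.
Proof. by move=> r_ge0; rewrite subr_ge0 truncn_le. Qed.

Lemma frac_lt1 r : 0 <= r -> frac r < 1.
Proof. by move=> /truncn_itv/andP[_]; rewrite ltrBlDl -natr1 addrC. Qed.

Lemma frac0 : frac 0 = 0.
Proof. by rewrite /frac truncn0 subrr. Qed.

Lemma sum_frac N (a : 'I_N -> rat) (K : nat) :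
  (forall i, 0 <= a i) -> \sum_i a i = K%:R ->
  (\sum_i Num.truncn (a i) <= K)%N /\
  \sum_i frac (a i) = (K - \sum_i Num.truncn (a i))%:R.
Proof.
move=> a_ge0 sum_a.
have sum_aE : \sum_i a i = (\sum_i Num.truncn (a i))%:R + \sum_i frac (a i).
  by rewrite natr_sum -big_split; apply: eq_bigr => i _; rewrite /= /frac addrC subrK.
have le_K : (\sum_i Num.truncn (a i) <= K)%N.
  by rewrite -(ler_nat rat) -sum_a sum_aE lerDl sumr_ge0 // => i _; apply: frac_ge0.
by split=> //; rewrite natrB // -sum_a sum_aE addrAC subrr add0r.
Qed.

Lemma sum_lt1 N (f : 'I_N.+1 -> rat) : (forall i, f i < 1) -> \sum_i f i < N.+1%:R.
Proof.
move=> f_lt1; rewrite -[N.+1 in X in _ < X]card_ord -sumr_const.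
by apply: ltr_sum => //; apply/hasP; exists ord0; rewrite ?mem_index_enum.
Qed.

Lemma sum_lt1_le_pred n (f : 'I_n.+1 -> rat) j (S : nat) :
  (forall i, f i < 1) -> f j = 0 -> \sum_i f i = S%:R -> (S <= n.-1)%N.
Proof.
move=> f_lt1 f_j; rewrite (bigD1_ord j) //= f_j add0r.
case: n f j f_lt1 f_j => [|n] f j f_lt1 _.
  by rewrite big_ord0 => /esym/eqP; rewrite pnatr_eq0 => /eqP ->.
by move=> sum_f; rewrite -ltnS -(ltr_nat rat) -sum_f sum_lt1.
Qed.

Lemma le_sum_nat_split N (u : 'I_N -> nat) (d : nat) : (d <= \sum_i u i)%N ->
  exists2 v : 'I_N -> nat, (forall i, v i <= u i)%N & (\sum_i v i)%N = d.
Proof.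
elim: N u d => [|N IH] u d.
  by rewrite big_ord0 leqn0 => /eqP ->; exists (fun=> 0%N); rewrite ?big_ord0.
rewrite big_ord_recl => le_d.
have [|v le_vu sum_v] := IH (fun i => u (lift ord0 i)) (d - minn d (u ord0))%N.
  by rewrite leq_subLR; case: (leqP d (u ord0)) => _; [exact: leq_addr | exact: le_d].
exists (fun i => if unlift ord0 i is Some i' then v i' else minn d (u ord0)).
  by move=> i; case: (unliftP ord0 i) => [i' ->|->]; [exact: le_vu | exact: geq_minr].
rewrite big_ord_recl unlift_none (eq_bigr v) ?sum_v; first lia.
by move=> i _; rewrite liftK.
Qed.

Definition replace_pt N (T : Type) (w : 'I_N -> T) (j : 'I_N) (z : T) (i : 'I_N) : T :=
  if i == j then z else w i.

Lemma det_replace_row (R : comPzRingType) m (B B' : 'M[R]_m) j (g : 'I_m -> R) :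
  (forall i k, i != j -> B' i k = B i k) -> (forall k, B' j k = \sum_i g i * B i k) ->
  \det B' = g j * \det B.
Proof.
move=> B'_row B'_jk.
have cof_j k : cofactor B' j k = cofactor B j k.
  rewrite /cofactor; congr (_ * \det _); apply/matrixP => a b; rewrite !mxE.
  by rewrite B'_row // eq_sym neq_lift.
have adj_i i : \sum_k g i * B i k * cofactor B j k = g i * (\det B *+ (i == j)).
  have /matrixP/(_ i j) := mul_mx_adj B; rewrite !mxE => <-.
  by rewrite mulr_sumr; apply: eq_bigr => k _; rewrite [(\adj B) k j]mxE mulrA.
rewrite (expand_det_row B' j).
under eq_bigr do rewrite B'_jk cof_j mulr_suml.
rewrite exchange_big /=; under eq_bigr do rewrite adj_i.
rewrite (bigD1 j) //= eqxx mulr1n big1 ?addr0 // => i /negbTE ->.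
by rewrite mulr0n mulr0.
Qed.

Lemma det_homog_mx_int n (w : 'I_n.+1 -> 'rV[rat]_n) :
  (forall i, lattice_pt (w i)) -> \det (homog_mx w) \is a Num.int.
Proof.
move=> w_lat; rewrite /determinant; apply: rpred_sum => s _.
rewrite rpredM ?rpredX ?rpredN ?rpred1 //; apply: rpred_prod => i _.
by rewrite mxE; case: unlift => [k|//]; apply: (lattice_ptE _).1 (w_lat _) k.
Qed.

Lemma det_homog_mx_replace n (w : 'I_n.+1 -> 'rV[rat]_n) (g : 'I_n.+1 -> rat) j :
  \sum_i g i = 1 ->
  \det (homog_mx (replace_pt w j (\sum_i g i *: w i))) = g j * \det (homog_mx w).
Proof.
move=> sum_g; apply: det_replace_row => [i k ne_ij|k].
  by rewrite /homog_mx !mxE /replace_pt (negbTE ne_ij).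
rewrite (eq_bigr (fun i => g i * if unlift ord0 k is Some k' then w i 0 k' else 1)).
  rewrite mxE /replace_pt eqxx; case: unlift => [k'|]; last by rewrite -mulr_suml sum_g mulr1.
  by rewrite summxE; apply: eq_bigr => i _; rewrite mxE.
by move=> i _; rewrite mxE.
Qed.

(* [n!] times the volume of the simplex [conv(w)]. *)
Definition normalized_volume n (w : 'I_n.+1 -> 'rV[rat]_n) : nat :=
  Num.truncn `|\det (homog_mx w)|.

Lemma normalized_volume_replace n (w : 'I_n.+1 -> 'rV[rat]_n) (g : 'I_n.+1 -> rat) j :
  (forall i, lattice_pt (w i)) -> lattice_pt (\sum_i g i *: w i) ->
  \sum_i g i = 1 -> 0 < g j < 1 -> \det (homog_mx w) != 0 ->
  (normalized_volume (replace_pt w j (\sum_i g i *: w i)%R) < normalized_volume w)%N.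
Proof.
move=> w_lat z_lat sum_g /andP[g_gt0 g_lt1] det_neq0.
have w'_lat i : lattice_pt (replace_pt w j (\sum_i g i *: w i) i).
  by rewrite /replace_pt; case: ifP.
rewrite /normalized_volume -(ltr_nat rat) !truncnK ?natr_norm_int ?det_homog_mx_int //.
by rewrite det_homog_mx_replace // normrM (gtr0_norm g_gt0) gtr_pMl // normr_gt0.
Qed.

Section Exchange.
Variables (n : nat) (G : 'rV[rat]_n -> Prop).

Lemma hull_comb_exchange N (a g : 'I_N -> rat) w t x i0 :
  hull_comb G a w t x -> 0 < g i0 -> \sum_i g i = 1 -> G (\sum_i g i *: w i) ->
  exists2 j, 0 < g j & exists a', hull_comb G a' (replace_pt w j (\sum_i g i *: w i)) t x.
Proof.
move=> [a_ge0 Gw sum_a ->] g_i0 sum_g; set z := \sum_i g i *: w i => Gz.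
have [j [s [g_j s_ge0 a_j a'_ge0]]] := ratio_test a_ge0 g_i0.
have sum_pt1 (T : zmodType) (u : T) : \sum_i (if i == j then u else 0) = u.
  by rewrite -big_mkcond big_pred1_eq.
exists j => //; exists (fun i => a i - s * g i + if i == j then s else 0); split.
- by move=> i; rewrite addr_ge0 //; case: ifP.
- by move=> i; rewrite /replace_pt; case: ifP.
- by rewrite big_split /= sum_pt1 sumrB -mulr_sumr sum_g mulr1 sum_a subrK.
rewrite [RHS](eq_bigr (fun i => (a i - s * g i) *: w i + if i == j then s *: z else 0)).
  rewrite big_split /= sum_pt1.
  rewrite [in RHS](eq_bigr (fun i => a i *: w i - s *: (g i *: w i))) => [|i _]; last first.
    by rewrite scalerBl scalerA.
  by rewrite sumrB -scaler_sumr subrK.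
move=> i _; rewrite scalerDl /replace_pt; case: eqVneq => [->|_]; last by rewrite scale0r.
by rewrite a_j subrr !scale0r !add0r.
Qed.

End Exchange.

Definition lattice_split n (G : 'rV[rat]_n -> Prop) (c d : nat) (x : 'rV[rat]_n) : Prop :=
  exists y, [/\ lattice_pt y, scaled_hull G c%:R y & scaled_hull G d%:R (x - y)].

Lemma one_sub_frac_weights n (a : 'I_n.+1 -> rat) (c d : nat) : (n - 1 <= c)%N ->
  (forall i, 0 <= a i) -> \sum_i a i = (c + d)%:R ->
  (\sum_i Num.truncn (a i) < d)%N ->
  (forall i, 0 < 1 - frac (a i) < 1) /\ \sum_i (1 - frac (a i)) = 1.
Proof.
move=> le_c a_ge0 sum_a lt_d.
have [le_K sum_fr] := sum_frac a_ge0 sum_a.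
have lt_S : (n.-1 < c + d - \sum_i Num.truncn (a i))%N by lia.
have le_S : (c + d - \sum_i Num.truncn (a i) <= n)%N.
  by rewrite -ltnS -(ltr_nat rat) -sum_fr sum_lt1 // => i; apply: frac_lt1.
split.
  move=> i; rewrite subr_gt0 frac_lt1 // ltrBlDr ltrDl lt0r frac_ge0 // andbT.
  apply/eqP => fr_i; have := sum_lt1_le_pred (fun i => frac_lt1 (a_ge0 i)) fr_i sum_fr; lia.
have S_n : (c + d - \sum_i Num.truncn (a i))%N = n by lia.
by rewrite sumrB sumr_const card_ord sum_fr S_n -natrB // subSnn.
Qed.

Section Descent.
Variables (n : nat) (P : 'rV[rat]_n -> Prop).
Hypothesis P_convex : convex_set P.
Local Notation L := (lattice_points P).

Lemma lattice_points_hull z : lattice_pt z -> scaled_hull L 1 z -> L z.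
Proof.
move=> z_lat /(scaled_hullS (fun w (Lw : L w) => Lw.2)) /(P_convex ltr01).
by rewrite invr1 scale1r.
Qed.

Lemma lattice_split_trunc N (a : 'I_N -> rat) w (c d : nat) x :
  hull_comb L a w (c + d)%:R x -> lattice_pt x ->
  (d <= \sum_i Num.truncn (a i))%N -> lattice_split L c d x.
Proof.
move=> [a_ge0 Lw sum_a Ex] x_lat le_d.
have [v le_v sum_v] := le_sum_nat_split le_d.
set z := \sum_i (v i)%:R *: w i.
have z_lat : lattice_pt z.
  by apply: lattice_pt_sum => i _; apply: lattice_ptZ; [apply: rpred_nat | case: (Lw i)].
exists (x - z); split.
- exact: lattice_ptB.
- exists N, (fun i => a i - (v i)%:R), w; split=> //.
  + move=> i; rewrite subr_ge0 (@le_trans _ _ (Num.truncn (a i))%:R) //.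
      by rewrite ler_nat.
    by rewrite truncn_le.
  + by rewrite sumrB sum_a -natr_sum sum_v natrD addrK.
  + by rewrite Ex /z -sumrB; apply: eq_bigr => i _; rewrite scalerBl.
- rewrite subKr; exists N, (fun i => (v i)%:R), w; split=> //.
  by rewrite -natr_sum sum_v.
Qed.

Lemma lattice_split_det0 (c d : nat) (a : 'I_n.+1 -> rat) w x : (n - 1 <= c)%N ->
  hull_comb L a w (c + d)%:R x -> lattice_pt x -> \det (homog_mx w) = 0 ->
  lattice_split L c d x.
Proof.
move=> le_c hull_x x_lat /affine_dep_of_det0[mu dep].
have [a' [j [hull_x' a'_j]]] := hull_comb_affine_dep hull_x dep.
have [a'_ge0 _ sum_a' _] := hull_x'.
apply: lattice_split_trunc hull_x' x_lat _.
have [le_K sum_fr] := sum_frac a'_ge0 sum_a'.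
have fr_j : frac (a' j) = 0 by rewrite a'_j frac0.
have := sum_lt1_le_pred (fun i => frac_lt1 (a'_ge0 i)) fr_j sum_fr; lia.
Qed.

Lemma lattice_split_or_descent (c d : nat) (a : 'I_n.+1 -> rat) w x : (n - 1 <= c)%N ->
  hull_comb L a w (c + d)%:R x -> lattice_pt x ->
  lattice_split L c d x \/ exists a' w',
    hull_comb L a' w' (c + d)%:R x /\ (normalized_volume w' < normalized_volume w)%N.
Proof.
move=> le_c hull_x x_lat; have [a_ge0 Lw sum_a Ex] := hull_x.
have [le_d|lt_d] := leqP d (\sum_i Num.truncn (a i)).
  by left; apply: lattice_split_trunc hull_x x_lat le_d.
have [/eqP det0|det_neq0] := boolP (\det (homog_mx w) == 0).
  by left; apply: lattice_split_det0 hull_x x_lat det0.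
right; have [g_bounds sum_g] := one_sub_frac_weights le_c a_ge0 sum_a lt_d.
set g := fun i => 1 - frac (a i) in g_bounds sum_g.
set z := \sum_i g i *: w i.
have w_lat i : lattice_pt (w i) by case: (Lw i).
have z_lat : lattice_pt z.
  have -> : z = \sum_i (1 + (Num.truncn (a i))%:R) *: w i - x.
    rewrite Ex -sumrB; apply: eq_bigr => i _.
    by rewrite -scalerBl /g /frac opprB addrA addrAC.
  apply: lattice_ptB x_lat; apply: lattice_pt_sum => i _; apply: lattice_ptZ (w_lat i).
  by rewrite rpredD ?rpred_nat.
have Lz : L z.
  apply: (lattice_points_hull z_lat); exists n.+1, g, w; split=> // i.
  by have /andP[/ltW] := g_bounds i.
have g0_gt0 : 0 < g ord0 by have /andP[] := g_bounds ord0.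
have [j _ [a' hull_x']] := hull_comb_exchange hull_x g0_gt0 sum_g Lz.
exists a', (replace_pt w j z); split=> //.
exact: normalized_volume_replace w_lat z_lat sum_g (g_bounds j) det_neq0.
Qed.

Lemma lattice_split_hull_comb (c d : nat) (a : 'I_n.+1 -> rat) w x : (n - 1 <= c)%N ->
  hull_comb L a w (c + d)%:R x -> lattice_pt x -> lattice_split L c d x.
Proof.
move=> le_c; have [V] := ubnP (normalized_volume w).
elim: V a w => // V IH a w lt_V hull_x x_lat.
have [//|[a' [w' [hull_x' lt_vol]]]] := lattice_split_or_descent le_c hull_x x_lat.
by apply: (IH a' w') => //; apply: leq_trans lt_vol _.
Qed.

Lemma lattice_split_scaled_hull (c d : nat) x : (n - 1 <= c)%N ->
  scaled_hull L (c + d)%:R x -> lattice_pt x -> lattice_split L c d x.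
Proof.
move=> le_c hull_x x_lat; have [cd0|cd_gt0] := posnP (c + d).
  have [c0 d0] : c = 0%N /\ d = 0%N by lia.
  subst c d; exists 0; rewrite subr0 (scaled_hull0_eq (hull_x : scaled_hull L 0 x)).
  by split; [exact: lattice_pt0 | exact: scaled_hull0 ..].
rewrite -(ltr0n rat) in cd_gt0; have [a [w hull_x']] := caratheodory cd_gt0 hull_x.
exact: lattice_split_hull_comb le_c hull_x' x_lat.
Qed.

Lemma lattice_decomp (c k : nat) x : (n - 1 <= c)%N ->
  scaled_hull L (k * c)%:R x -> lattice_pt x ->
  exists f : 'I_k -> 'rV[rat]_n,
    (forall i, lattice_pt (f i) /\ scaled_hull L c%:R (f i)) /\ x = \sum_i f i.
Proof.
move=> le_c; elim: k x => [|k IH] x hull_x x_lat.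
  rewrite mul0n in hull_x; exists (fun=> 0); split=> [[]//|].
  by rewrite big_ord0; apply: scaled_hull0_eq hull_x.
rewrite mulSn in hull_x.
have [y [y_lat hull_y hull_xy]] := lattice_split_scaled_hull le_c hull_x x_lat.
have [f [f_ok Exy]] := IH (x - y) hull_xy (lattice_ptB x_lat y_lat).
exists (fun i => if unlift ord_max i is Some i' then f i' else y); split.
  by move=> i; case: (unliftP ord_max i) => [i' _|_]; [apply: f_ok | split].
rewrite (bigD1_ord ord_max) //= unlift_none (eq_bigr f) => [|i _]; last by rewrite liftK.
by rewrite -Exy addrC subrK.
Qed.

End Descent.

Lemma dilate_dilate n (P : 'rV[rat]_n -> Prop) k c x :
  dilate k (dilate c P) x <-> dilate (k * c) P x.
Proof.
split=> [[_ [[p [Pp ->]] ->]]|[p [Pp ->]]].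
  by exists p; rewrite scalerA -natrM.
by exists (c%:R *: p); split; [exists p | rewrite scalerA -natrM].
Qed.

Lemma normal_dilate0 n (P : 'rV[rat]_n -> Prop) : normal_polyhedron (dilate 0 P).
Proof.
have dilate0 y : dilate 0 P y <-> (exists p, P p) /\ y = 0.
  split=> [[p [Pp ->]]|[[p Pp] ->]]; first by split; [exists p | rewrite scale0r].
  by exists p; rewrite scale0r.
move=> k k_gt0 m; rewrite dilate_dilate muln0 dilate0.
split=> [[[[p Pp] ->] _]|[f [f_ok ->]]].
  exists (fun=> 0); split; last by rewrite big1.
  by move=> i; split; [apply/dilate0; split; [exists p|] | exact: lattice_pt0].
have f0 i : f i = 0 by have [/dilate0[]] := f_ok i.
rewrite big1 => [|i _]; last exact: f0.
split; last exact: lattice_pt0.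
by have [/dilate0[]] := f_ok (Ordinal k_gt0).
Qed.

Section NormalDilate.
Variables (n : nat) (P : 'rV[rat]_n -> Prop).
Hypothesis P_convex : convex_set P.
Hypothesis P_lattice_hull : forall x, P x -> scaled_hull (lattice_points P) 1 x.

Lemma dilate_scaled_hull k x :
  (0 < k)%N -> dilate k P x <-> scaled_hull (lattice_points P) k%:R x.
Proof.
move=> k_gt0; split=> [[p [Pp ->]]|hull_x].
  by rewrite -[X in scaled_hull _ X]mulr1; apply: scaled_hullZ (P_lattice_hull Pp).
exists (k%:R^-1 *: x); split; last by rewrite scalerA mulfV ?scale1r // pnatr_eq0 -lt0n.
by apply: P_convex; [rewrite ltr0n | apply: scaled_hullS hull_x => w []].
Qed.

Theorem normal_dilate c : (n - 1 <= c)%N -> normal_polyhedron (dilate c P).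
Proof.
case: c => [_|c le_c]; first exact: normal_dilate0.
move=> k k_gt0 m; rewrite dilate_dilate dilate_scaled_hull ?muln_gt0 ?k_gt0 //.
split=> [[hull_m m_lat]|[f [f_ok ->]]].
  have [f [f_ok ->]] := lattice_decomp P_convex le_c hull_m m_lat.
  exists f; split=> // i; have [f_lat hull_f] := f_ok i.
  by split=> //; apply/dilate_scaled_hull.
split; last by apply: lattice_pt_sum => i _; case: (f_ok i).
rewrite mulnC natrM mulr_natr -[k in _ *+ k]card_ord -sumr_const.
by apply: scaled_hull_sum => i _; apply/dilate_scaled_hull; case: (f_ok i).
Qed.

End NormalDilate.

Theorem theorem3p6 (n : nat) (gens : seq 'rV[rat]_n) (verts : seq 'rV[rat]_n) :
  pointed (cone_gen gens) ->
  (forall v, v \in verts -> lattice_pt v) ->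
  forall e : nat, (n - 1 <= e)%N ->
    normal_polyhedron
      (dilate e (minkowski (conv_hull verts) (dual_cone (cone_gen gens)))).
Proof.
move=> _ verts_lattice e le_e; apply: normal_dilate le_e.
- apply: convex_set_minkowski; [exact: convex_set_conv_hull | exact: convex_set_dual_cone].
- by apply: minkowski_lattice_hull => //; [exact: dual_cone0 | exact: dual_coneZ].
Qed.
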